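(* In the setting of the context, suppose Condition I holds: $ZR^i\in L^1$ for all $i\in\{1,\dots,d\}$ and all $Z\in\mathcal{Q}$. Then the set $C_{\mathcal{Q}}:=\{\mathbb{E}[-Z(R-r\mathbf{1})]:Z\in\mathcal{Q}\}$ is a convex subset of $\mathbb{R}^d$, and for every $\pi\in\mathbb{R}^d$, $\rho(X_\pi)=\sup_{c\in C_{\mathcal{Q}}}\pi\cdot c$. Moreover, $\rho$ satisfies the Fatou property on $\mathcal{X}=\{X_\pi:\pi\in\mathbb{R}^d\}$: if $X_n,X\in\mathcal{X}$, $X_n\to X$ a.s. and $|X_n|\le Y$ a.s. for some $Y\in L$, then $\rho(X)\le\liminf_n\rho(X_n)$.
   Context: Let $(\Omega,\mathcal{F},\mathbb{P})$ be a probability space and a market: riskless asset $S^0_0=1$, $S^0_1=1+r$, $r>-1$; risky assets $S^1,\dots,S^d$ with constants $S^i_0>0$ and real-valued $\mathcal{F}$-measurable $S^i_1$; returns $R^i:=(S^i_1-S^i_0)/S^i_0$, $R=(R^1,\dots,R^d)$. Standing assumptions: nonredundancy (if $\theta\in\mathbb{R}^{1+d}$ with $\sum_{i=0}^d\theta^iS^i_t=0$ a.s. for $t\in\{0,1\}$ then $\theta=0$), $R^i\in L^1$, $\mathbb{E}[R^i]\ne r$ for some $i$. Excess return: $X_\pi:=\pi\cdot(R-r\mathbf{1})$. $L$ is a Riesz space with $L^\infty\subset L\subset L^1$ containing all $X_\pi$. $\mathcal{D}:=\{Z\in L^1:Z\ge0,\mathbb{E}[Z]=1\}$; $\mathcal{Q}\subset\mathcal{D}$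 is convex with $1\in\mathcal{Q}$ and $\rho(X)=\sup_{Z\in\mathcal{Q}}\mathbb{E}[-ZX]$ on $L$, where $\mathbb{E}[-ZX]:=\mathbb{E}[ZX^-]-\mathbb{E}[ZX^+]$ with $\mathbb{E}[-ZX]=\infty$ if $\mathbb{E}[ZX^-]=\infty$. *)

From HB Require Import structures.
From mathcomp Require Import all_boot all_order all_algebra.
From mathcomp Require Import all_classical all_reals all_analysis.
Set Implicit Arguments. Unset Strict Implicit. Unset Printing Implicit Defensive.
Import Order.TTheory GRing.Theory Num.Theory.
Local Open Scope classical_set_scope.
Local Open Scope ring_scope.

Section market.
Context {disp : measure_display} {T : measurableType disp} {R : realType}.

Definition ret (d : nat) (S0 : 'I_d -> R) (S1 : 'I_d -> T -> R) (i : 'I_d) (w : T) : R :=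
  (S1 i w - S0 i) / S0 i.

Definition Xpi (d : nat) (S0 : 'I_d -> R) (S1 : 'I_d -> T -> R) (r : R)
  (pi : 'rV[R]_d) (w : T) : R :=
  \sum_(i < d) pi 0 i * (ret S0 S1 i w - r).

Definition dotv (d : nat) (u v : 'rV[R]_d) : R := \sum_(i < d) u 0 i * v 0 i.

(* nonredundancy: sum_{i=0}^d theta^i S^i_t = 0 a.s. for t = 0,1 implies theta = 0;
   theta^0 is theta0, (theta^1..theta^d) is theta *)
Definition nonredundant (P : probability T R) (d : nat) (r : R)
  (S0 : 'I_d -> R) (S1 : 'I_d -> T -> R) : Prop :=
  forall (theta0 : R) (theta : 'I_d -> R),
    theta0 * 1 + \sum_(i < d) theta i * S0 i = 0 ->
    {ae P, forall w, theta0 * (1 + r) + \sum_(i < d) theta i * S1 i w = 0} ->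
    theta0 = 0 /\ (forall i, theta i = 0).

Definition Linfty (P : probability T R) : set (T -> R) :=
  [set f : T -> R | measurable_fun setT f /\ exists M : R, {ae P, forall w, `|f w| <= M}].

Definition L1 (P : probability T R) : set (T -> R) :=
  [set f | P.-integrable setT (fun w => (f w)%:E)].

Definition riesz_space (L : set (T -> R)) : Prop :=
  L (fun _ => 0) /\
  (forall f g, L f -> L g -> L (fun w => f w + g w)) /\
  (forall (a : R) f, L f -> L (fun w => a * f w)) /\
  (forall f g, L f -> L g -> L (fun w => Num.max (f w) (g w))).

Definition Dset (P : probability T R) : set (T -> R) :=
  [set Z | L1 P Z /\ {ae P, forall w, 0 <= Z w} /\
           (\int[P]_w (Z w)%:E = 1)%E].

Definition convex_fun_set (Q : set (T -> R)) : Prop :=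
  forall Z1 Z2 (t : R), Q Z1 -> Q Z2 -> 0 <= t <= 1 ->
    Q (fun w => t * Z1 w + (1 - t) * Z2 w).

(* E[-Z X] := E[Z X^-] - E[Z X^+], = +oo if E[Z X^-] = +oo *)
Definition Eneg (P : probability T R) (Z X : T -> R) : \bar R :=
  let a := (\int[P]_w (Z w * Num.max (- X w) 0)%:E)%E in
  let b := (\int[P]_w (Z w * Num.max (X w) 0)%:E)%E in
  if a == +oo%E then +oo%E else (a - b)%E.

Definition rho (P : probability T R) (Q : set (T -> R)) (X : T -> R) : \bar R :=
  ereal_sup [set Eneg P Z X | Z in Q].

Definition CQ (P : probability T R) (Q : set (T -> R)) (d : nat)
  (S0 : 'I_d -> R) (S1 : 'I_d -> T -> R) (r : R) : set 'rV[R]_d :=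
  [set c | exists2 Z, Q Z &
     c = \row_(i < d) Rintegral P setT (fun w => - (Z w * (ret S0 S1 i w - r)))].

Definition convex_rV (d : nat) (C : set 'rV[R]_d) : Prop :=
  forall c1 c2 (t : R), C c1 -> C c2 -> 0 <= t <= 1 ->
    C (t *: c1 + (1 - t) *: c2).

End market.

(** On the excess returns, Condition I gives E[-Z X_pi] = pi . E[-Z (R - r 1)],
    so rho(X_pi) is the support function of C_Q at pi, and C_Q is convex as
    the image of the convex set Q under the affine map Z |-> E[-Z (R - r 1)].
    For the Fatou property, nonredundancy says that no nonzero pi is
    orthogonal to R(w) - r 1 for almost every w; hence finitely many points
    w_j of the event where X_n -> X already give vectors R(w_j) - r 1 spanning
    R^d.  Every c in C_Q is a linear combination of them, so pi_n . c is the
    same combination of the X_n(w_j) and converges to pi . c; taking the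
    supremum over c yields rho(X) <= liminf rho(X_n). *)

From HB Require Import structures.
From mathcomp Require Import all_boot all_order all_algebra.
From mathcomp Require Import all_classical all_reals all_analysis.
From mathcomp Require Import measurable_realfun.
From mathcomp Require Import ring lra zify.
Set Implicit Arguments. Unset Strict Implicit. Unset Printing Implicit Defensive.
Import Order.TTheory GRing.Theory Num.Theory.
Import numFieldNormedType.Exports.
Local Open Scope classical_set_scope.
Local Open Scope ring_scope.

Section points_spanning.
Variables (F : fieldType) (X : Type) (n : nat) (G : set X) (v : X -> 'rV[F]_n).
Hypothesis annihilator_eq0 :
  forall p : 'rV[F]_n, (forall x, G x -> v x *m p^T = 0) -> p = 0.

Lemma row_full_or_point_outside m (M : 'M[F]_(m, n)) :
  row_full M \/ exists2 x, G x & ~~ (v x <= M)%MS.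
Proof.
have [|inM] := pselect (exists2 x, G x & ~~ (v x <= M)%MS); [by right | left].
have kerMt0 : kermx M^T = 0.
  apply/row_matrixP => i; rewrite row0; apply: annihilator_eq0 => x Gx.
  have /submxP[D ->] : (v x <= M)%MS by apply: contrapT => /negP Mx; apply: inM; exists x.
  have /sub_kermxP kerM : (row i (kermx M^T) <= kermx M^T)%MS by exact: row_sub.
  by rewrite -mulmxA -[M *m _]trmxK trmx_mul trmxK kerM trmx0 mulmx0.
by have := kermx_eq0 M^T; rewrite kerMt0 eqxx /row_free mxrank_tr => /esym.
Qed.

Lemma row_full_matrix_of_points :
  exists m (M : 'M[F]_(m, n)), row_full M /\ forall j, exists2 x, G x & row j M = v x.
Proof.
suff /(_ n) [m [M [rkM rowsM]]] : forall k, exists m (M : 'M[F]_(m, n)),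
    (minn k n <= \rank M)%N /\ forall j, exists2 x, G x & row j M = v x.
  by exists m, M; rewrite /row_full eqn_leq rank_leq_col -{1}(minnn n).
elim=> [|k [m [M [rkM rowsM]]]].
  by exists 0%N, 0; rewrite min0n; split=> // -[].
have [fullM|[x Gx xM]] := row_full_or_point_outside M.
  by exists m, M; split=> //; move/eqP: fullM ->; exact: geq_minr.
exists (m + 1)%N, (col_mx M (v x)); split.
  have : (M < M + v x)%MS by rewrite ltmxE addsmxSl addsmx_sub submx_refl (negbTE xM).
  by move/rank_ltmx; rewrite addsmxE; lia.
move=> j; rewrite -(splitK j); case: (fintype.split j) => j' /=.
  by rewrite rowKu.
by exists x; rewrite // rowKd row_id.
Qed.

End points_spanning.

Lemma le_limn_einf (R : realType) (u v : (\bar R)^nat) :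
  (forall n, u n <= v n)%E -> (limn_einf u <= limn_einf v)%E.
Proof.
move=> uv; rewrite !limn_einf_lim; apply: lee_lim; [exact: is_cvg_einfs|exact: is_cvg_einfs|].
apply: nearW => n; apply: le_ereal_inf_tmp => _ [k /= nk <-].
apply: le_trans (uv k); apply: ereal_inf_lbound; by exists k.
Qed.

Lemma dotv_mulmx (R : realType) (n m : nat)
  (p : 'rV[R]_n) (D : 'M[R]_(1, m)) (M : 'M[R]_(m, n)) :
  dotv p (D *m M) = \sum_j D 0 j * dotv p (row j M).
Proof.
rewrite /dotv; under eq_bigr do rewrite mxE mulr_sumr.
rewrite exchange_big /=; apply: eq_bigr => j _; rewrite mulr_sumr.
by apply: eq_bigr => i _; rewrite mxE; ring.
Qed.

Lemma dotvE (R : realType) (n : nat) (p c : 'rV[R]_n) : dotv p c = (c *m p^T) 0 0.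
Proof. by rewrite mxE; apply: eq_bigr => i _; rewrite mxE mulrC. Qed.

Section integrable.
Context {disp : measure_display} {T : measurableType disp} {R : realType}.
Variable P : probability T R.
Implicit Types f g : T -> R.

Lemma L1_measurable f : L1 P f -> measurable_fun setT f.
Proof. by case/integrableP => mf _; apply/measurable_EFinP. Qed.

Lemma eq_L1 f g : f =1 g -> L1 P f -> L1 P g.
Proof. by move=> /funext ->. Qed.

Lemma L1D f g : L1 P f -> L1 P g -> L1 P (fun w => f w + g w).
Proof. by move=> Lf Lg; apply: eq_integrable (integrableD measurableT Lf Lg). Qed.

Lemma L1Zl (k : R) f : L1 P f -> L1 P (fun w => k * f w).
Proof. by move=> Lf; apply: eq_integrable (integrableZl measurableT k Lf). Qed.

Lemma L1_sum (I : finType) (F : I -> T -> R) :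
  (forall i, L1 P (F i)) -> L1 P (fun w => \sum_i F i w).
Proof.
move=> LF; have := @integrable_sum _ _ _ P setT measurableT _ (index_enum I) xpredT
  (fun i w => (F i w)%:E) (fun i _ => LF i).
by apply: eq_integrable => // w _; rewrite /= sumEFin.
Qed.

Lemma L1_integralE f : L1 P f -> (\int[P]_w (f w)%:E)%E = (Rintegral P setT f)%:E.
Proof. by move=> Lf; rewrite /Rintegral fineK //; exact: integrable_fin_num. Qed.

Lemma Rintegral_lincomb (I : finType) (a : I -> R) (F : I -> T -> R) :
  (forall i, L1 P (F i)) ->
  Rintegral P setT (fun w => \sum_i a i * F i w) = \sum_i a i * Rintegral P setT (F i).
Proof.
move=> LF; have LaF i : L1 P (fun w => a i * F i w) by exact: L1Zl.
apply: EFin_inj; rewrite -L1_integralE; last exact: L1_sum.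
under eq_integral do rewrite -sumEFin.
rewrite integral_sum // -sumEFin; apply: eq_bigr => i _.
under eq_integral do rewrite EFinM.
rewrite integralZl //; last exact: LF.
by rewrite L1_integralE.
Qed.

Lemma maxrN0_subr (x : R) : Num.max (- x) 0 - Num.max x 0 = - x.
Proof. by rewrite /Order.max; case: ifPn => h1; case: ifPn => h2; rewrite -?leNgt in h1 h2; lra. Qed.

Lemma normr_maxr0 (x : R) : `|Num.max x 0| <= `|x|.
Proof. by rewrite /Order.max; case: ifPn; rewrite ?normr0. Qed.

Lemma Eneg_Rintegral (Z X : T -> R) :
  measurable_fun setT Z -> measurable_fun setT X -> L1 P (fun w => Z w * X w) ->
  Eneg P Z X = (Rintegral P setT (fun w => - (Z w * X w)))%:E.
Proof.
move=> mZ mX LZX.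
have L1_Zpart (g : T -> R) : measurable_fun setT g -> (forall w, `|g w| <= `|X w|) ->
    L1 P (fun w => Z w * g w).
  move=> mg gX; apply: le_integrable LZX => //.
    by apply/measurable_EFinP; exact: measurable_funM.
  by move=> w _; rewrite lee_fin !normrM ler_wpM2l.
have Lneg : L1 P (fun w => Z w * Num.max (- X w) 0).
  apply: L1_Zpart => [|w]; last by rewrite -[`|X w|]normrN normr_maxr0.
  by apply: measurable_maxr => //; exact: measurableT_comp.
have Lpos : L1 P (fun w => Z w * Num.max (X w) 0).
  by apply: L1_Zpart => [|w]; [exact: measurable_maxr | exact: normr_maxr0].
rewrite /Eneg (L1_integralE Lneg) (L1_integralE Lpos) /= -EFinB -RintegralB //.
by congr EFin; apply: eq_Rintegral => w _; rewrite -mulrBr maxrN0_subr mulrN.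
Qed.

End integrable.

Section market.
Context {disp : measure_display} {T : measurableType disp} {R : realType}.
Variables (P : probability T R) (d : nat) (r : R).
Variables (S0 : 'I_d -> R) (S1 : 'I_d -> T -> R).

Definition excess_loss (Z : T -> R) : 'rV[R]_d :=
  \row_i Rintegral P setT (fun w => - (Z w * (ret S0 S1 i w - r))).

Lemma Xpi_dotv (pi : 'rV[R]_d) w : Xpi S0 S1 r pi w = dotv pi (\row_i (ret S0 S1 i w - r)).
Proof. by apply: eq_bigr => i _; rewrite mxE. Qed.

Lemma Xpi_ae_eq0 : nonredundant P r S0 S1 -> (forall i, 0 < S0 i) ->
  forall pi : 'rV[R]_d, {ae P, forall w, Xpi S0 S1 r pi w = 0} -> pi = 0.
Proof.
move=> nonred S0_gt0 pi Xpi0.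
have S0_neq0 i : S0 i != 0 by rewrite gt_eqF.
(* the portfolio holding pi_i / S0_i units of asset i, financed by the riskless asset *)
have holdings0 : forall i, pi 0 i / S0 i = 0.
  apply: (proj2 (nonred (- \sum_i pi 0 i) (fun i => pi 0 i / S0 i) _ _)).
  - rewrite mulr1 addrC; apply/eqP; rewrite subr_eq0; apply/eqP/eq_bigr => i _.
    by rewrite divfK.
  - apply: filterS Xpi0 => w Xpi_w0; rewrite -[RHS]Xpi_w0 /Xpi /ret.
    rewrite mulNr mulr_suml -sumrN -big_split /=.
    by apply: eq_bigr => i _; field.
apply/rowP => i; rewrite mxE; apply/eqP.
by move/eqP: (holdings0 i); rewrite mulf_eq0 invr_eq0 (negbTE (S0_neq0 i)) orbF.
Qed.

Section condition_I.
Variable Z : T -> R.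
Hypotheses (LZ : L1 P Z) (LZR : forall i, L1 P (fun w => Z w * ret S0 S1 i w)).

Lemma L1_excess_loss_integrand i : L1 P (fun w => - (Z w * (ret S0 S1 i w - r))).
Proof.
apply: (@eq_L1 _ _ _ _ (fun w => (-1) * (Z w * ret S0 S1 i w) + r * Z w)) => [w|]; first ring.
by apply: L1D; apply: L1Zl.
Qed.

Lemma oppr_ZXpiE (pi : 'rV[R]_d) w :
  - (Z w * Xpi S0 S1 r pi w) = \sum_i pi 0 i * - (Z w * (ret S0 S1 i w - r)).
Proof. by rewrite /Xpi mulr_sumr -sumrN; apply: eq_bigr => i _; ring. Qed.

Lemma Eneg_Xpi (pi : 'rV[R]_d) : measurable_fun setT (Xpi S0 S1 r pi) ->
  Eneg P Z (Xpi S0 S1 r pi) = (dotv pi (excess_loss Z))%:E.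
Proof.
move=> mXpi; have LNZXpi : L1 P (fun w => - (Z w * Xpi S0 S1 r pi w)).
  apply: eq_L1 (fun w => esym (oppr_ZXpiE pi w)) _.
  by apply: L1_sum => i; apply: L1Zl; exact: L1_excess_loss_integrand.
have LZXpi : L1 P (fun w => Z w * Xpi S0 S1 r pi w).
  by apply: eq_L1 (L1Zl (-1) LNZXpi) => w; rewrite mulN1r opprK.
rewrite Eneg_Rintegral //; last exact: (L1_measurable LZ).
under eq_Rintegral do rewrite oppr_ZXpiE.
rewrite Rintegral_lincomb; last exact: L1_excess_loss_integrand.
by congr EFin; apply: eq_bigr => i _; rewrite mxE.
Qed.

End condition_I.

Lemma excess_loss_convex (Z1 Z2 : T -> R) (t : R) :
  L1 P Z1 -> (forall i, L1 P (fun w => Z1 w * ret S0 S1 i w)) ->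
  L1 P Z2 -> (forall i, L1 P (fun w => Z2 w * ret S0 S1 i w)) ->
  excess_loss (fun w => t * Z1 w + (1 - t) * Z2 w) =
  t *: excess_loss Z1 + (1 - t) *: excess_loss Z2.
Proof.
move=> LZ1 LZR1 LZ2 LZR2; apply/rowP => i; rewrite !mxE.
have L1f1 := L1_excess_loss_integrand LZ1 LZR1 i.
have L1f2 := L1_excess_loss_integrand LZ2 LZR2 i.
rewrite -(RintegralZl _ measurableT L1f1) -(RintegralZl _ measurableT L1f2).
rewrite -(RintegralD measurableT (L1Zl t L1f1) (L1Zl (1 - t) L1f2)).
by apply: eq_Rintegral => w _; ring.
Qed.

Section risk_measure.
Variable Q : set (T -> R).
Hypotheses (QD : Q `<=` Dset P)
  (condI : forall i Z, Q Z -> L1 P (fun w => Z w * ret S0 S1 i w)).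

Lemma CQ_convex : convex_fun_set Q -> convex_rV (CQ P Q S0 S1 r).
Proof.
move=> Qconv c1 c2 t [Z1 QZ1 ->] [Z2 QZ2 ->] t01.
exists (fun w => t * Z1 w + (1 - t) * Z2 w); first exact: Qconv.
have [[LZ1 _] [LZ2 _]] := (QD QZ1, QD QZ2).
by rewrite -[RHS]/(excess_loss _) excess_loss_convex // => i; exact: condI.
Qed.

Lemma rho_Xpi (pi : 'rV[R]_d) : measurable_fun setT (Xpi S0 S1 r pi) ->
  rho P Q (Xpi S0 S1 r pi) = ereal_sup [set (dotv pi c)%:E | c in CQ P Q S0 S1 r].
Proof.
move=> mXpi; rewrite /rho; congr ereal_sup; apply/seteqP; split=> x.
- case=> Z QZ <-; have [LZ _] := QD QZ.
  exists (excess_loss Z); first by exists Z.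
  by rewrite Eneg_Xpi // => i; exact: condI.
- case=> _ [Z QZ ->] <-; have [LZ _] := QD QZ.
  by exists Z => //; rewrite Eneg_Xpi // => i; exact: condI.
Qed.

End risk_measure.

Lemma dotv_cvg_of_Xpi_cvg (pis : nat -> 'rV[R]_d) (pi : 'rV[R]_d) :
  nonredundant P r S0 S1 -> (forall i, 0 < S0 i) ->
  {ae P, forall w, Xpi S0 S1 r (pis n) w @[n --> \oo] --> Xpi S0 S1 r pi w} ->
  forall c, dotv (pis n) c @[n --> \oo] --> dotv pi c.
Proof.
move=> nonred S0_gt0 cvgX c.
pose G w := Xpi S0 S1 r (pis n) w @[n --> \oo] --> Xpi S0 S1 r pi w.
pose v w : 'rV[R]_d := \row_i (ret S0 S1 i w - r).
have annihilator_eq0 (p : 'rV[R]_d) : (forall w, G w -> v w *m p^T = 0) -> p = 0.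
  move=> annih; apply: (Xpi_ae_eq0 nonred S0_gt0); apply: filterS cvgX => w Gw.
  by rewrite Xpi_dotv dotvE annih // mxE.
have [m [M [fullM rowsM]]] := row_full_matrix_of_points annihilator_eq0.
have [D ->] := submxP (submx_full c fullM).
under eq_cvg do rewrite dotv_mulmx.
rewrite dotv_mulmx; apply: cvg_big => // [|j _]; first exact: add_continuous.
have [w Gw ->] := rowsM j; apply: cvgMr.
by under eq_cvg do rewrite -Xpi_dotv; rewrite -Xpi_dotv.
Qed.

Lemma rho_Xpi_fatou (Q : set (T -> R)) (pis : nat -> 'rV[R]_d) (pi : 'rV[R]_d) :
  Q `<=` Dset P -> (forall i Z, Q Z -> L1 P (fun w => Z w * ret S0 S1 i w)) ->
  (forall p, measurable_fun setT (Xpi S0 S1 r p)) ->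
  nonredundant P r S0 S1 -> (forall i, 0 < S0 i) ->
  {ae P, forall w, Xpi S0 S1 r (pis n) w @[n --> \oo] --> Xpi S0 S1 r pi w} ->
  (rho P Q (Xpi S0 S1 r pi) <= limn_einf (fun n => rho P Q (Xpi S0 S1 r (pis n))))%E.
Proof.
move=> QD condI mXpi nonred S0_gt0 cvgX.
rewrite rho_Xpi //; apply: ge_ereal_sup => _ [c Cc <-].
have cvg_c : (dotv (pis n) c)%:E @[n --> \oo] --> (dotv pi c)%:E.
  by apply: cvg_EFin; [exact: nearW | exact: dotv_cvg_of_Xpi_cvg].
rewrite -(cvg_limn_einf_sup cvg_c).1; apply: le_limn_einf => n.
by rewrite rho_Xpi //; apply: ereal_sup_ubound; exists c.
Qed.

End market.

Theorem proposition4p3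
  (disp : measure_display) (T : measurableType disp) (R : realType)
  (P : probability T R) (d : nat) (r : R)
  (S0 : 'I_d -> R) (S1 : 'I_d -> T -> R)
  (L Q : set (T -> R))
  (hr : -1 < r)
  (hS0 : forall i, 0 < S0 i)
  (hS1 : forall i, measurable_fun setT (S1 i))
  (hnonred : nonredundant P r S0 S1)
  (hRint : forall i, L1 P (ret S0 S1 i))
  (hEr : exists i, (\int[P]_w (ret S0 S1 i w)%:E)%E <> r%:E)
  (hL : riesz_space L)
  (hLinf : Linfty P `<=` L)
  (hL1 : L `<=` L1 P)
  (hXL : forall pi : 'rV[R]_d, L (Xpi S0 S1 r pi))
  (hQD : Q `<=` Dset P)
  (hQconv : convex_fun_set Q)
  (hQ1 : Q (fun _ => 1))
  (condI : forall i Z, Q Z -> L1 P (fun w => Z w * ret S0 S1 i w)) :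
  convex_rV (CQ P Q S0 S1 r) /\
  (forall pi : 'rV[R]_d,
     rho P Q (Xpi S0 S1 r pi) =
     ereal_sup [set (dotv pi c)%:E | c in CQ P Q S0 S1 r]) /\
  (forall (Xn : nat -> T -> R) (X Y : T -> R),
     (forall n, exists pi : 'rV[R]_d, Xn n = Xpi S0 S1 r pi) ->
     (exists pi : 'rV[R]_d, X = Xpi S0 S1 r pi) ->
     L Y ->
     {ae P, forall w, Xn n w @[n --> \oo] --> X w} ->
     (forall n, {ae P, forall w, `|Xn n w| <= Y w}) ->
     (rho P Q X <= limn_einf (fun n => rho P Q (Xn n)))%E).
Proof.
have mXpi pi : measurable_fun setT (Xpi S0 S1 r pi) := L1_measurable (hL1 _ (hXL pi)).
split; first exact: CQ_convex.
split=> [pi|Xn X Y Xn_Xpi [pi ->] _ cvgXn _]; first exact: rho_Xpi.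
have [pis Xn_pis] := choice Xn_Xpi.
have Xn_eq : Xn = fun n => Xpi S0 S1 r (pis n) by apply/funext.
rewrite {}Xn_eq in cvgXn *.
exact: rho_Xpi_fatou hQD condI mXpi hnonred hS0 cvgXn.
Qed.
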